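(* Let $S_0,S_1,S_2,S_3$ be $3$-stars, let $G_0=S_0$ and for $i\in\{1,2,3\}$ let $G_i=G_{i-1}\rhd_{v_{i-1}}S_i$, where $v_{i-1}$ is a vertex of $G_{i-1}$. If $Z=G_3$ has maximum degree at most $3$ and diameter $8$, then $Z$ is unique up to isomorphism.
   Context: A 3-star is $K_{1,3}$. For a graph $G'$, a vertex $v$ of $G'$ and a star $S$, $G'\rhd_v S$ is the graph obtained from the disjoint union of $G'$ and $S$ by identifying $v$ with a leaf of $S$. *)

From mathcomp Require Import all_boot all_fingroup.
Set Implicit Arguments. Unset Strict Implicit. Unset Printing Implicit Defensive.

Fixpoint walk (T : finType) (e : rel T) (k : nat) (x y : T) : bool :=
  if k is k'.+1 then [exists z, e x z && walk e k' z y] else x == y.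

Definition dist_is (T : finType) (e : rel T) (x y : T) (d : nat) : Prop :=
  walk e d x y /\ forall j, j < d -> ~~ walk e j x y.

Definition diameter_is (T : finType) (e : rel T) (d : nat) : Prop :=
  (forall x y, exists2 k, k <= d & walk e k x y) /\
  (exists x y, dist_is e x y d).

Definition degree (T : finType) (e : rel T) (x : T) : nat := #|[set y | e x y]|.

Definition max_degree_le (T : finType) (e : rel T) (D : nat) : Prop :=
  forall x, degree e x <= D.

Definition isomorphic (T : finType) (e1 e2 : rel T) : Prop :=
  exists f : {perm T}, forall x y, e1 x y = e2 (f x) (f y).

Definition edgeb (a b : nat) : rel nat :=
  fun x y => ((x == a) && (y == b)) || ((x == b) && (y == a)).

Definition star0 : rel nat := fun x y => [|| edgeb 0 1 x y, edgeb 0 2 x y | edgeb 0 3 x y].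

(* G' |>_v S  where G' has vertex set {0,..,n-1}: the new 3-star S has
   centre n and leaves v (identified with a leaf of S), n+1, n+2. *)
Definition glue_star (e : rel nat) (n v : nat) : rel nat :=
  fun x y => [|| e x y, edgeb v n x y, edgeb n n.+1 x y | edgeb n n.+2 x y].

(* G_3 for the choices v_0 (vertex of G_0, < 4), v_1 (vertex of G_1, < 7),
   v_2 (vertex of G_2, < 10); G_3 has vertex set {0,..,12}. *)
Definition G3rel (v0 v1 v2 : nat) : rel nat :=
  glue_star (glue_star (glue_star star0 4 v0) 7 v1) 10 v2.

Definition G3 (v0 v1 v2 : nat) : rel 'I_13 :=
  fun x y => G3rel v0 v1 v2 x y.

From mathcomp Require Import all_boot all_fingroup.

Set Implicit Arguments. Unset Strict Implicit. Unset Printing Implicit Defensive.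

(* Z has 13 vertices and is determined by the attachment vertices
   v0 < 4, v1 < 7, v2 < 10, so there are only 280 candidates. Maximum degree
   and diameter are decided by counting neighbours and by breadth-first
   layers; exactly 48 candidates pass, and for each of them a backtracking
   search finds an isomorphism onto the candidate (v0, v1, v2) = (1, 2, 5),
   which is then checked edge by edge. *)

Lemma isomorphic_sym (T : finType) (e1 e2 : rel T) :
  isomorphic e1 e2 -> isomorphic e2 e1.
Proof. by case=> f fE; exists f^-1%g => x y; rewrite fE !permKV. Qed.

Lemma isomorphic_trans (T : finType) (e1 e2 e3 : rel T) :
  isomorphic e1 e2 -> isomorphic e2 e3 -> isomorphic e1 e3.
Proof. by case=> f fE [g gE]; exists (f * g)%g => x y; rewrite fE gE !permM. Qed.

Section ExtensionalRelations.

Variables (T : finType) (e1 e2 : rel T).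
Hypothesis e12 : e1 =2 e2.

Lemma eq_walk k x y : walk e1 k x y = walk e2 k x y.
Proof. by elim: k x => [|k IHk] x //=; apply: eq_existsb => z; rewrite e12 IHk. Qed.

Lemma eq_max_degree_le D : max_degree_le e1 D -> max_degree_le e2 D.
Proof.
move=> deg x; rewrite /degree (_ : [set y | e2 x y] = [set y | e1 x y]) ?deg //.
by apply/setP => y; rewrite !inE e12.
Qed.

Lemma eq_diameter_is d : diameter_is e1 d -> diameter_is e2 d.
Proof.
case=> near [x [y [walk_d short]]]; split=> [x' y' | ].
  by have [k lekd walk_k] := near x' y'; exists k; rewrite -?eq_walk.
by exists x, y; split=> [|j /short]; rewrite -eq_walk.
Qed.

Lemma eq_isomorphic : isomorphic e1 e2.
Proof. by exists 1%g => x y; rewrite !perm1. Qed.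

End ExtensionalRelations.

Section GraphsOnOrdinals.

Variables (n : nat) (E : rel nat).

Let e : rel 'I_n := fun x y => E x y.

Lemma all_iota_ord (P : pred nat) : reflect (forall x : 'I_n, P x) (all P (iota 0 n)).
Proof.
rewrite -val_enum_ord all_map.
by apply: (iffP allP) => [P_ x | P_ x _]; [apply: P_; rewrite mem_enum | apply: P_].
Qed.

Lemma has_iota_ord (P : pred nat) : reflect (exists x : 'I_n, P x) (has P (iota 0 n)).
Proof.
rewrite -val_enum_ord has_map.
by apply: (iffP hasP) => [[x _ Px] | [x Px]]; exists x; rewrite ?mem_enum.
Qed.

(* Evaluating [tabulate_rel E'] once stores the neighbour lists of E', so
   that vm_compute does not re-evaluate E' at every edge query. *)
Definition tabulate_rel (E' : rel nat) : rel nat :=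
  let N := [seq [seq y <- iota 0 n | E' x y] | x <- iota 0 n] in
  fun x y => y \in nth [::] N x.

Lemma tabulate_relE E' (x y : 'I_n) : tabulate_rel E' x y = E' x y.
Proof.
rewrite /tabulate_rel (nth_map 0) ?size_iota // nth_iota // add0n mem_filter.
by rewrite mem_iota leq0n add0n ltn_ord !andbT.
Qed.

Definition max_degree_leb (D : nat) : bool :=
  all (fun x => count (E x) (iota 0 n) <= D) (iota 0 n).

Lemma degreeE (x : 'I_n) : degree e x = count (E x) (iota 0 n).
Proof.
rewrite /degree cardE /enum_mem -enumT size_filter -val_enum_ord count_map.
by apply: eq_count => y; rewrite /= inE.
Qed.

Lemma max_degree_leP D : reflect (max_degree_le e D) (max_degree_leb D).
Proof. by apply: (iffP (all_iota_ord _)) => deg x; move: (deg x); rewrite degreeE. Qed.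

Definition in_nbhd (W : seq nat) : seq nat := [seq x <- iota 0 n | has (E x) W].

Definition walk_starts (k y : nat) : seq nat := iter k in_nbhd [:: y].

Lemma walk_starts_lt k (y : 'I_n) x : x \in walk_starts k y -> x < n.
Proof.
case: k => [|k]; first by rewrite inE => /eqP ->.
by rewrite /walk_starts iterS mem_filter mem_iota => /andP[_ /andP[]].
Qed.

Lemma walk_startsE k (x y : 'I_n) : walk e k x y = (val x \in walk_starts k y).
Proof.
elim: k x => [|k IHk] x; first by rewrite /= inE.
rewrite /= -/(walk_starts k y) mem_filter mem_iota leq0n add0n ltn_ord !andbT.
apply/existsP/hasP => [[z /andP[exz]] | [z zk exz]].
  by rewrite IHk; exists (val z).
by exists (Ordinal (walk_starts_lt zk)); apply/andP; rewrite IHk.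
Qed.

Lemma walk_ltP m (x y : 'I_n) :
  reflect (exists2 k, k < m & walk e k x y)
          (has (fun W => val x \in W) (traject in_nbhd [:: val y] m)).
Proof.
apply: (iffP hasP) => [[W /trajectP[k ltkm ->] xW] | [k ltkm]].
  by exists k; rewrite // walk_startsE.
rewrite walk_startsE => xk.
by exists (walk_starts k y); first by apply/trajectP; exists k.
Qed.

Definition diameter_isb (d : nat) : bool :=
  all (fun y => let layers := traject in_nbhd [:: y] d.+1 in
         all (fun x => has (fun W => x \in W) layers) (iota 0 n)) (iota 0 n) &&
  has (fun y => let layers := traject in_nbhd [:: y] d in let far := walk_starts d y in
         has (fun x => (x \in far) && ~~ has (fun W => x \in W) layers) (iota 0 n))
      (iota 0 n).

Lemma diameter_isP d : reflect (diameter_is e d) (diameter_isb d).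
Proof.
apply: (iffP andP) => [[/all_iota_ord near] | [near [x [y [walk_d short]]]]].
  move=> /has_iota_ord[y /has_iota_ord[x /andP[x_far x_short]]]; split=> [x' y' | ].
    by have /all_iota_ord/(_ x')/walk_ltP[k] := near y'; exists k.
  exists x, y; split=> [|j ltjd]; first by rewrite walk_startsE.
  by apply: contraNN x_short => walk_j; apply/walk_ltP; exists j.
split.
  apply/all_iota_ord => y'; apply/all_iota_ord => x'; apply/walk_ltP.
  by have [k] := near x' y'; exists k.
apply/has_iota_ord; exists y; apply/has_iota_ord; exists x.
rewrite /= -walk_startsE walk_d; apply/walk_ltP => -[j ltjd].
exact/negP/short.
Qed.

Definition relabelsb (E' : rel nat) (s : seq nat) : bool :=
  perm_eq s (iota 0 n) &&
  all (fun x => all (fun y => E x y == E' (nth 0 s x) (nth 0 s y)) (iota 0 n)) (iota 0 n).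

Lemma relabels_isomorphic E' s :
  relabelsb E' s -> isomorphic e (fun x y : 'I_n => E' x y).
Proof.
case/andP=> s_perm /all_iota_ord adj.
have s_size : size s = n by rewrite (perm_size s_perm) size_iota.
have s_lt (i : 'I_n) : nth 0 s i < n.
  have : nth 0 s i \in s by rewrite mem_nth ?s_size.
  by rewrite (perm_mem s_perm) mem_iota.
have f_inj : injective (fun i => Ordinal (s_lt i)).
  move=> i j /(congr1 val) /eqP /=.
  by rewrite nth_uniq ?s_size ?(perm_uniq s_perm) ?iota_uniq // => /eqP/val_inj.
exists (perm f_inj) => x y; rewrite !permE /=.
by have /all_iota_ord/(_ y)/eqP := adj x.
Qed.

(* Backtracking search for a relabelling: [s] lists the images of the
   vertices 0, ..., size s - 1, and vertex [size s] is mapped next. Nothing is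
   proved about the search; its output is validated by [relabelsb]. *)
Fixpoint extend_relabelling (E' : rel nat) (k : nat) (s : seq nat) : option (seq nat) :=
  if k is k'.+1 then
    let fits t := (t \notin s) &&
      all (fun y => E (size s) y == E' t (nth 0 s y)) (iota 0 (size s)) in
    let fix try ts := if ts is t :: ts' then
        if fits t then
          if extend_relabelling E' k' (rcons s t) is Some r then Some r else try ts'
        else try ts'
      else None in
    try (iota 0 n)
  else Some s.

Definition found_isomorphism (E' : rel nat) : bool :=
  if extend_relabelling E' n [::] is Some s then relabelsb E' s else false.

Lemma found_isomorphism_sound E' :
  found_isomorphism E' -> isomorphic e (fun x y : 'I_n => E' x y).
Proof.
by rewrite /found_isomorphism; case: extend_relabelling => // s /relabels_isomorphic.
Qed.

End GraphsOnOrdinals.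

Definition admissible (a b c : nat) : bool :=
  let E := tabulate_rel 13 (G3rel a b c) in max_degree_leb 13 E 3 && diameter_isb 13 E 8.

Lemma admissible_iso_G3_125 :
  all (fun a => all (fun b => all (fun c =>
      admissible a b c ==>
      found_isomorphism 13 (tabulate_rel 13 (G3rel a b c)) (tabulate_rel 13 (G3rel 1 2 5)))
    (iota 0 10)) (iota 0 7)) (iota 0 4).
Proof. by vm_compute. Qed.

Lemma G3_tabulated a b c :
  G3 a b c =2 (fun x y : 'I_13 => tabulate_rel 13 (G3rel a b c) x y).
Proof. by move=> x y; rewrite tabulate_relE. Qed.

Lemma G3_iso_G3_125 a b c : a < 4 -> b < 7 -> c < 10 ->
  max_degree_le (G3 a b c) 3 -> diameter_is (G3 a b c) 8 ->
  isomorphic (G3 a b c) (G3 1 2 5).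
Proof.
move=> lta ltb ltc deg diam.
have adm : admissible a b c.
  apply/andP; split.
    exact/max_degree_leP/(eq_max_degree_le (G3_tabulated a b c)).
  exact/diameter_isP/(eq_diameter_is (G3_tabulated a b c)).
have a_in : a \in iota 0 4 by rewrite mem_iota.
have b_in : b \in iota 0 7 by rewrite mem_iota.
have c_in : c \in iota 0 10 by rewrite mem_iota.
move: admissible_iso_G3_125 => /allP/(_ a a_in)/allP/(_ b b_in)/allP/(_ c c_in).
move=> /implyP/(_ adm)/found_isomorphism_sound tab_iso.
apply: isomorphic_trans (eq_isomorphic (G3_tabulated a b c)) _.
apply: isomorphic_trans tab_iso _.
exact/isomorphic_sym/eq_isomorphic/G3_tabulated.
Qed.

Theorem mainTheorem14 (v0 v1 v2 w0 w1 w2 : nat) :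
  v0 < 4 -> v1 < 7 -> v2 < 10 ->
  w0 < 4 -> w1 < 7 -> w2 < 10 ->
  max_degree_le (G3 v0 v1 v2) 3 -> diameter_is (G3 v0 v1 v2) 8 ->
  max_degree_le (G3 w0 w1 w2) 3 -> diameter_is (G3 w0 w1 w2) 8 ->
  isomorphic (G3 v0 v1 v2) (G3 w0 w1 w2).
Proof.
move=> ltv0 ltv1 ltv2 ltw0 ltw1 ltw2 deg_v diam_v deg_w diam_w.
apply: isomorphic_trans (G3_iso_G3_125 ltv0 ltv1 ltv2 deg_v diam_v) _.
exact/isomorphic_sym/(G3_iso_G3_125 ltw0 ltw1 ltw2 deg_w diam_w).
Qed.
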